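(* In the homogeneous UAV Persistent Service model (all displacement times equal to $g>0$, $2g<f$, $c\ge0$), every schedule that keeps each of the $N$ locations covered at every time $t\ge 0$ uses at least $$M=N+\left\lceil\frac{c+2g}{f-2g}\,N\right\rceil$$ UAVs. Consequently (together with the feasibility of HoRR with this many UAVs) this $M$ is exactly the minimum fleet size for persistent coverage.
   Context: UAV Persistent Service model: there is a single recharging station (RS) and a finite set $\mathcal N$ of $N$ aerial locations, served by identical UAVs. A UAV with a full battery can fly for at most $f>0$ time units; replacing/recharging its battery at the RS takes $c\ge0$ time units. Flying between the RS and location $i$ takes $g_i>0$ time units (here $g_i=g$ for all $i$), with $2g_i<f$. A UAV's activity consists of sorties: it leaves the RS fully charged, flies to one location, stays there (covering it), and flies back to the RS, the total airborne time of the sortie being at most $f$; back at the RS it spends $c$ time units recharging (possibly followed by idle time) before its next sortie. At time $0$ each UAV is fully charged, either at the RS or at a location. A location is covered at time $t$ if some UAV is present there at time $t$; a schedule is feasible if all locations are covered at all times $t\ge0$. HoRR schedule: with $x=\frac{f-2g}{N}$, initially one fully charged UAV at each location, the others fully charged at the RS; for $k=1,2,\dots$ a backup leaves the RS at time $kx-g$ and at time $kx$ replaces the serving UAV with least remaining energy, which returns to the RS, recharges and becomes a backup. *)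

From HB Require Import structures.
From mathcomp Require Import all_boot all_order all_algebra.
From mathcomp Require Import reals.
Set Implicit Arguments. Unset Strict Implicit. Unset Printing Implicit Defensive.
Import Order.TTheory GRing.Theory Num.Theory.
Local Open Scope ring_scope.

(* A sortie of a UAV: the location it serves (locations are 'I_N), the time
   it arrives at that location (s_arr), and the time it leaves it (s_lv).
   It departs the RS at s_arr - g and is back at the RS at s_lv + g. *)
Record sortie (R : realType) (N : nat) := Sortie {
  s_loc : 'I_N;
  s_arr : R;
  s_lv  : R }.

(* The activity of one UAV: whether at time 0 it is (fully charged) at a
   location rather than at the RS, the number of sorties it performs
   (None = infinitely many), and its sorties, indexed 0,1,2,... in time order.
   If start_at_loc holds, sortie 0 is the one in progress at time 0
   (the UAV is at s_loc of sortie 0 from time 0 = s_arr on). *)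
Record uav_plan (R : realType) (N : nat) := UavPlan {
  start_at_loc : bool;
  nsorties : option nat;
  sorties : nat -> sortie R N }.

Definition active (n : option nat) (k : nat) : Prop :=
  match n with None => True | Some m => (k < m)%N end.

(* Time at which the battery used during sortie k started being consumed:
   departure time from the RS, or time 0 for an initial sortie of a UAV that
   starts (fully charged) at a location. *)
Definition energy_start (R : realType) (N : nat) (g : R) (p : uav_plan R N) (k : nat) : R :=
  if start_at_loc p && (k == 0)%N then 0 else s_arr (sorties p k) - g.

(* Feasibility of one UAV's activity with parameters f (flight autonomy),
   g (RS <-> location displacement time), c (recharge time). *)
Definition valid_plan (R : realType) (N : nat) (f g c : R) (p : uav_plan R N) : Prop :=
  [/\ (start_at_loc p -> active (nsorties p) 0 /\ s_arr (sorties p 0) = 0),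
      (~~ start_at_loc p -> active (nsorties p) 0 -> 0 <= s_arr (sorties p 0) - g),
      (forall k, active (nsorties p) k ->
         s_arr (sorties p k) <= s_lv (sorties p k) /\
         s_lv (sorties p k) + g - energy_start g p k <= f) &
      (forall k, active (nsorties p) k.+1 ->
         s_lv (sorties p k) + g + c <= s_arr (sorties p k.+1) - g)].

Definition present (R : realType) (N : nat) (p : uav_plan R N) (i : 'I_N) (t : R) : Prop :=
  exists k, [/\ active (nsorties p) k, s_loc (sorties p k) = i &
                s_arr (sorties p k) <= t <= s_lv (sorties p k)].

Definition feasible_schedule (R : realType) (N M : nat) (f g c : R)
    (sched : 'I_M -> uav_plan R N) : Prop :=
  (forall u, valid_plan f g c (sched u)) /\
  (forall (i : 'I_N) (t : R), 0 <= t -> exists u : 'I_M, present (sched u) i t).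

(* A UAV's successive arrivals at locations are separated by its stay plus at
   least [2g + c] (two flights and a recharge), and every stay but the first
   lasts at most [f - 2g].  Hence a UAV serves locations for at most a fraction
   [(f - 2g) / (f + c)] of any long horizon [T], up to an additive constant.
   Keeping [N] locations covered on [0, T] requires [N T] units of service, so
   [N (f + c) <= M (f - 2g)], i.e. [M - N >= (c + 2g) N / (f - 2g)]. *)
From HB Require Import structures.
From mathcomp Require Import all_boot all_order all_algebra.
From mathcomp Require Import reals ring lra.
Import Order.TTheory GRing.Theory Num.Theory.
Set Implicit Arguments.
Unset Strict Implicit.
Local Open Scope ring_scope.

Section IntervalCover.
Variables (R : realFieldType) (I : finType) (a b : I -> R).

Lemma cover_left_end {P : pred I} {x y : R} : x < y ->
    (forall t, x < t < y -> exists2 j, P j & a j <= t <= b j) ->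
  exists2 j, P j & a j <= x.
Proof.
move=> xy hcov.
have [|j0 Pj0 _] := hcov ((x + y) / 2); first by apply/andP; split; lra.
case: (arg_minP a Pj0) => j Pj jmin; exists j => //.
rewrite leNgt; apply/negP => xa.
set m := Num.min (a j) y.
have m_aj : m <= a j by rewrite ge_min lexx.
have m_y : m <= y by rewrite ge_min lexx orbT.
have x_m : x < m by rewrite lt_min xa xy.
have [|k Pk /andP[ak _]] := hcov ((x + m) / 2); first by apply/andP; split; lra.
by have := jmin k Pk; lra.
Qed.

Lemma interval_cover_length (P : pred I) (x y : R) :
    (forall j, P j -> a j <= b j) ->
    (forall t, x < t < y -> exists2 j, P j & a j <= t <= b j) ->
  y - x <= \sum_(j | P j) (b j - a j).
Proof.
have [n] := ubnP #|P|; elim: n P x y => // n IH P x y /ltnSE cardP hab hcov.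
have [yx|xy] := lerP y x.
  have : 0 <= \sum_(j | P j) (b j - a j) by apply: sumr_ge0 => j /hab; rewrite subr_ge0.
  lra.
have [j Pj ajx] := cover_left_end xy hcov.
(* Drop interval [j]; the others cover [(max x (b j), y)]. *)
rewrite (bigD1 j) //=.
set x' := Num.max x (b j).
have x'_bj : b j <= x' by rewrite le_max lexx orbT.
have x'_x : x' - x <= b j - a j.
  by have := hab j Pj; rewrite /x' /Num.max; case: ltP; lra.
suff : y - x' <= \sum_(i | P i && (i != j)) (b i - a i) by lra.
apply: IH => [|i /andP[Pi _]|t /andP[x't ty]].
- move: cardP; rewrite (cardD1 j) [j \in P]Pj add1n; apply: leq_trans.
  by rewrite ltnS; apply: subset_leq_card; apply/subsetP => i; rewrite !inE andbC.
- exact: hab.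
- have [|k Pk /andP[akt tbk]] := hcov t.
    by apply/andP; split => //; apply: le_lt_trans x't; rewrite le_max lexx.
  exists k; last by rewrite akt tbk.
  by rewrite Pk; apply: contraTneq tbk => ->; rewrite -ltNge; apply: le_lt_trans x't.
Qed.
End IntervalCover.

Lemma slope_le_of_affine_le (R : realFieldType) (a b K : R) :
  (forall T, 0 <= T -> a * T <= b * T + K) -> a <= b.
Proof.
move=> hab; rewrite leNgt; apply/negP => ba.
pose T := (`|K| + 1) / (a - b).
have T_ge0 : 0 <= T by apply: divr_ge0; [have := normr_ge0 K | ]; lra.
have eT : (a - b) * T = `|K| + 1 by rewrite mulrC divfK // subr_eq0 gt_eqF.
by have := hab T T_ge0; have := ler_norm K; lra.
Qed.


Definition activeb (n : option nat) (k : nat) : bool :=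
  if n is Some m then (k < m)%N else true.

Lemma activeP {n k} : reflect (active n k) (activeb n k).
Proof. by case: n => [m|]; [apply: idP | apply: ReflectT]. Qed.

Lemma active_pred {n k} : active n k.+1 -> active n k.
Proof. by case: n => //= m; apply: ltnW. Qed.

Section PlanService.
Variables (R : realType) (N : nat) (f g c : R) (p : uav_plan R N).
Hypothesis hp : valid_plan f g c p.

Local Notation act k := (active (nsorties p) k).
Local Notation arr k := (s_arr (sorties p k)).
Local Notation lv k := (s_lv (sorties p k)).

Definition stay k := lv k - arr k.

Lemma stay_ge0 {k} : act k -> 0 <= stay k.
Proof. by case: hp => _ _ hk _ /hk[]; rewrite subr_ge0. Qed.

Lemma stay_le (hg : 0 <= g) {k} : act k -> stay k <= f - g.
Proof.
case: hp => hstart _ hk _ /hk[_]; rewrite /stay /energy_start.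
by case: ifP => [/andP[/hstart[_ arr0] /eqP k0]|_]; [subst k; rewrite arr0|]; lra.
Qed.

Lemma stay_succ_le {k} : act k.+1 -> stay k.+1 <= f - 2 * g.
Proof. by case: hp => _ _ hk _ /hk[_]; rewrite /stay /energy_start andbF; lra. Qed.

Lemma arr_succ_ge {k} : act k.+1 -> arr k + stay k + 2 * g + c <= arr k.+1.
Proof. by case: hp => _ _ _ hk /hk; rewrite /stay; lra. Qed.

Lemma arr_ge (hg : 0 <= g) (hc : 0 <= c) {k} : act k -> k%:R * (2 * g) <= arr k.
Proof.
elim: k => [|k IH] hk.
  rewrite mul0r; case: hp => hstart hrs _ _.
  by case: (boolP (start_at_loc p)) => [/hstart[_ ->]|/hrs/(_ hk)]; lra.
have := arr_succ_ge hk; have := stay_ge0 (active_pred hk).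
by have := IH (active_pred hk); rewrite -natr1 mulrDl mul1r; lra.
Qed.

(* The correction term is nonpositive for every sortie but the first. *)
Lemma stay_gap (hgf : 2 * g <= f) {k} : act k.+1 ->
  (f + c) * stay k <= (f - 2 * g) * (arr k.+1 - arr k) + (2 * g + c) * (stay k - (f - 2 * g)).
Proof.
move=> hk; have := arr_succ_ge hk.
have -> : (f + c) * stay k = (f - 2 * g) * (stay k + 2 * g + c) + (2 * g + c) * (stay k - (f - 2 * g)) by ring.
move=> H; rewrite lerD2r; apply: ler_wpM2l; lra.
Qed.

Lemma sum_stay_le (hg : 0 <= g) (hgf : 2 * g <= f) (hc : 0 <= c) {m} : act m ->
  (f + c) * \sum_(k < m) stay k <= (f - 2 * g) * (arr m - arr 0) + g * (2 * g + c).
Proof.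
elim: m => [|m IH] hm.
  by rewrite big_ord0 mulr0 subrr mulr0 add0r; apply: mulr_ge0; lra.
have gap := stay_gap hgf hm.
rewrite big_ord_recr /= mulrDr.
case: m IH hm gap => [|m] IH hm gap.
  rewrite big_ord0 mulr0 add0r.
  have : (2 * g + c) * (stay 0 - (f - 2 * g)) <= (2 * g + c) * g.
    by apply: ler_wpM2l; have := stay_le hg (active_pred hm); lra.
  lra.
have := IH (active_pred hm).
have : (2 * g + c) * (stay m.+1 - (f - 2 * g)) <= 0.
  by apply: mulr_ge0_le0; have := stay_succ_le (active_pred hm); lra.
lra.
Qed.

Definition arrived_by (T : R) k := activeb (nsorties p) k && (arr k <= T).

Lemma arrived_by_earlier (hg : 0 <= g) (hc : 0 <= c) {T j k} :
  (j <= k)%N -> arrived_by T k -> arrived_by T j.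
Proof.
elim: k => [|k IH]; first by rewrite leqn0 => /eqP->.
rewrite leq_eqVlt ltnS => /orP[/eqP->//|jk] /andP[/activeP hk hkT].
apply: IH => //; apply/andP; split; first exact/activeP/active_pred.
by have := arr_succ_ge hk; have := stay_ge0 (active_pred hk); lra.
Qed.

Lemma plan_service_le (hg : 0 <= g) (hgf : 2 * g <= f) (hc : 0 <= c) T n :
  0 <= T -> (f + c) * \sum_(k < n | arrived_by T k) stay k <= (f - 2 * g) * T + (f + c) * f.
Proof.
move=> hT; elim: n => [|n IH].
  by rewrite big_ord0 mulr0; apply: addr_ge0; apply: mulr_ge0; lra.
have [arr_n|narr_n] := boolP (arrived_by T n); last first.
  by rewrite big_mkcond big_ord_recr /= (negbTE narr_n) addr0 -big_mkcond.
rewrite (eq_bigl xpredT) => [|k]; last first.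
  by apply: (arrived_by_earlier hg hc _ arr_n); rewrite -ltnS.
have /andP[/activeP h0 _] := arrived_by_earlier hg hc (leq0n n) arr_n.
case/andP: arr_n => /activeP hn hnT.
rewrite big_ord_recr /= mulrDr.
have := sum_stay_le hg hgf hc hn.
have : (f - 2 * g) * (arr n - arr 0) <= (f - 2 * g) * T.
  by apply: ler_wpM2l; have := arr_ge hg hc h0; rewrite mul0r; lra.
have : (f + c) * stay n <= (f + c) * (f - g).
  by apply: ler_wpM2l; [lra | exact: stay_le].
have : g * (2 * g + c) <= g * (f + c) by apply: ler_wpM2l; lra.
lra.
Qed.
End PlanService.

Section Schedule.
Variables (R : realType) (N M : nat) (f g c : R) (sched : 'I_M -> uav_plan R N).
Hypothesis hsched : feasible_schedule f g c sched.

Local Notation sortie_of j := (sorties (sched j.1) j.2).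

Lemma location_service_ge (hg : 0 < g) (hc : 0 <= c) (i : 'I_N) (T : R) (n : nat) :
    T < n%:R * (2 * g) ->
  T <= \sum_(j : 'I_M * 'I_n | arrived_by (sched j.1) T j.2 && (s_loc (sortie_of j) == i))
          stay (sched j.1) j.2.
Proof.
case: hsched => hv hcov Tn; rewrite -{1}[T]subr0 /stay.
apply: interval_cover_length.
  by move=> j /andP[/andP[/activeP hk _] _]; case: (hv j.1) => _ _ /(_ _ hk)[].
move=> t /andP[t0 tT].
have [u [k [hk loc_k /andP[arr_t t_lv]]]] := hcov i t (ltW t0).
have kn : (k < n)%N.
  have := arr_ge (hv u) (ltW hg) hc hk.
  by rewrite -(ltr_nat R) -(@ltr_pM2r _ (2 * g)); lra.
exists (u, Ordinal kn); last by rewrite arr_t t_lv.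
by rewrite /arrived_by /= loc_k eqxx andbT; apply/andP; split; [apply/activeP | lra].
Qed.

Lemma fleet_service_bound (hg : 0 < g) (hgf : 2 * g <= f) (hc : 0 <= c) (T : R) :
  0 <= T -> (f + c) * (N%:R * T) <= M%:R * ((f - 2 * g) * T + (f + c) * f).
Proof.
move=> hT; case: (hsched) => hv _.
pose n := (Num.truncn (T / (2 * g))).+1.
have Tn : T < n%:R * (2 * g) by rewrite -ltr_pdivrMr ?truncnS_gt //; lra.
have cover_all : N%:R * T <= \sum_(u < M) \sum_(k < n | arrived_by (sched u) T k) stay (sched u) k.
  rewrite pair_big_dep /= (partition_big (fun j : 'I_M * 'I_n => s_loc (sortie_of j)) xpredT) //=.
  rewrite mulr_natl -[N in T *+ N]card_ord -sumr_const.
  by apply: ler_sum => i _; exact: location_service_ge.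
apply: le_trans (ler_wpM2l _ cover_all) _; first lra.
rewrite mulr_sumr mulr_natl -[M in _ *+ M]card_ord -sumr_const.
by apply: ler_sum => u _; exact: plan_service_le (hv u) (ltW hg) hgf hc _ _ hT.
Qed.

End Schedule.

Theorem theorem2 (R : realType) (N M : nat) (f g c : R)
  (hg : 0 < g) (hgf : 2 * g < f) (hc : 0 <= c)
  (sched : 'I_M -> uav_plan R N) :
  feasible_schedule f g c sched ->
  (N%:Z + Num.ceil ((c + 2 * g) / (f - 2 * g) * N%:R) <= M%:Z)%R.
Proof.
move=> hsched.
have fleet : N%:R * (f + c) <= M%:R * (f - 2 * g).
  apply: (slope_le_of_affine_le (K := M%:R * ((f + c) * f))) => T hT.
  have := fleet_service_bound hsched hg (ltW hgf) hc hT.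
  lra.
rewrite -lerBrDl ceil_le_int rmorphB /= -!pmulrn mulrAC ler_pdivrMr; last lra.
by rewrite mulrBl; lra.
Qed.
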